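(* Let $I=(i_1\leq i_2\leq\cdots\leq i_r)$ with $r\geq3$ and suppose $I$ has a repeated entry, $i_s=i_{s+1}$ for some $s$. Let $\chi_I=\sum_\varepsilon a_I^\varepsilon w_I^\varepsilon$ with $a_I^\varepsilon\in\mathcal B$, the sum over binary $r$-tuples $\varepsilon=(\epsilon_1,\dots,\epsilon_r)$ with $1\leq\sum\epsilon_j\leq r-1$. If $\alpha(\chi_I)+\beta(\chi_I)=\gamma(\chi_I)+\delta(\chi_I)$, then $\chi_I=0$.
   Context: $\mathcal B$ is a graded commutative rational algebra and $W$ a graded rational vector space concentrated in odd degrees with basis $\{w_i\}$ indexed by a totally ordered set. In $\mathcal B\otimes\land W\otimes\land W$ write $w_i^0=w_i=1\otimes w_i\otimes1$ and $w_i^1=w'_i=1\otimes1\otimes w_i$, and $w_I^\varepsilon=w_{i_1}^{\epsilon_1}\cdots w_{i_r}^{\epsilon_r}$. In $\mathcal B\otimes\land W^{\otimes 3}$ write $w,w',w''$ for $w$ in the three copies. Algebra maps $\alpha,\beta,\gamma,\delta\colon\mathcal B\otimes\land W\otimes\land W\to\mathcal B\otimes\land W\otimes\land W\otimes\land W$, identity on $\mathcal B$, are given by $\alpha(w)=w,\alpha(w')=w'$; $\beta(w)=w+w',\beta(w')=w''$; $\gamma(w)=w,\gamma(w')=w'+w''$; $\delta(w)=w',\delta(w')=w''$. *)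

From HB Require Import structures.
From mathcomp Require Import all_boot all_order all_algebra.
Set Implicit Arguments. Unset Strict Implicit. Unset Printing Implicit Defensive.
Import Order.TTheory GRing.Theory.
Local Open Scope ring_scope.

(* Concrete model of  B (x) /\W (x) ... (x) /\W  (k copies) as a left
   B-module, which is all the statement uses (the algebra maps are the
   identity on B and B-linear).
   A generator (c, i) stands for w_i in the c-th copy of /\W
   (c = 0 : w_i, c = 1 : w'_i, c = 2 : w''_i).  All generators are odd, and
   /\W (x) /\W (x) /\W (graded tensor product) = /\(W + W + W), so
   generators anticommute and square to zero. *)
Section Ext.
Variables (d : Order.disp_t) (T : orderType d) (B : lmodType rat).

Definition gen := (nat * T)%type.

(* an auxiliary strict total order on generators, used only to compute
   signs of permutations of words *)
Definition gen_lt (x y : gen) : bool :=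
  (x.2 < y.2)%O || ((x.2 == y.2) && (x.1 < y.1)%N).

Fixpoint inv (s : seq gen) : nat :=
  match s with
  | [::] => 0%N
  | x :: s' => (count (fun y => gen_lt y x) s' + inv s')%N
  end.

(* formal expression  sum_k b_k * w_{s_k}  (b_k in B, s_k a word of generators) *)
Definition elt := seq (B * seq gen).

(* coefficient of the (uniq) word u, i.e. of the basis monomial w_u of the
   exterior algebra: words with a repeated generator are 0, and a
   permutation of u contributes with the sign of the permutation. *)
Definition coef (x : elt) (u : seq gen) : B :=
  \sum_(t <- x | perm_eq t.2 u && uniq t.2)
     ((-1 : rat) ^+ (inv t.2 + inv u)) *: t.1.

Definition ext_eq (x y : elt) : Prop := forall u, coef x u = coef y u.

(* product of linear forms l_1 ... l_n (each a rational combination of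
   generators), expanded into rational multiples of words *)
Fixpoint expand (ls : seq (seq (rat * gen))) : seq (rat * seq gen) :=
  match ls with
  | [::] => [:: (1, [::])]
  | l :: ls' => [seq (c.1 * p.1, c.2 :: p.2) | c <- l, p <- expand ls']
  end.

(* the algebra map, identity on B, sending each generator g to the
   linear form f g *)
Definition amap (f : gen -> seq (rat * gen)) (x : elt) : elt :=
  flatten [seq [seq (p.1 *: t.1, p.2) | p <- expand (map f t.2)] | t <- x].

(* alpha, beta, gamma, delta : B(x)/\W(x)/\W -> B(x)/\W(x)/\W(x)/\W *)
Definition alpha_gen (g : gen) : seq (rat * gen) := [:: (1, g)].
Definition beta_gen (g : gen) : seq (rat * gen) :=
  if g.1 == 0%N then [:: (1, (0%N, g.2)); (1, (1%N, g.2))]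
  else [:: (1, (2%N, g.2))].
Definition gamma_gen (g : gen) : seq (rat * gen) :=
  if g.1 == 0%N then [:: (1, (0%N, g.2))]
  else [:: (1, (1%N, g.2)); (1, (2%N, g.2))].
Definition delta_gen (g : gen) : seq (rat * gen) :=
  if g.1 == 0%N then [:: (1, (1%N, g.2))] else [:: (1, (2%N, g.2))].

Definition alpha := amap alpha_gen.
Definition beta := amap beta_gen.
Definition gamma := amap gamma_gen.
Definition delta := amap delta_gen.

Definition wordI (r : nat) (I : r.-tuple T) (e : r.-tuple bool) : seq gen :=
  zip (map nat_of_bool e) I.

Definition chi (r : nat) (I : r.-tuple T) (a : r.-tuple bool -> B) : elt :=
  [seq (a e, wordI I e) |
     e <- filter (fun e : r.-tuple bool => (0 < count id e < r)%N)
                 (enum {: r.-tuple bool})].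

End Ext.

From Pilot Require Import Defs.
From HB Require Import structures.
From mathcomp Require Import all_boot all_order all_algebra.
From mathcomp Require Import zify.
Import Order.TTheory GRing.Theory.
Local Open Scope ring_scope.
Set Implicit Arguments. Unset Strict Implicit. Unset Printing Implicit Defensive.

(* We show that every coefficient of chi_I on a basis monomial w_v
   (v a duplicate-free word in the generators) vanishes.  A monomial w_I^e
   with no repeated letter has e_s != e_{s+1}, so it contains w_i and w'_i
   and, as r >= 3, a letter of index different from i.  For such v we read
   the identity at a well-chosen monomial w_u of the triple tensor product:
   - if v contains some w_k, k != i, take u obtained from v by
     w_i, w'_i |-> w'_i, w''_i and w'_t |-> w''_t (t != i): then w_u does
     not occur in alpha, gamma, delta of chi_I, and occurs in beta(chi_I)
     only as the image of w_v;
   - otherwise take u obtained by w'_i |-> w''_i: alpha and delta vanish,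
     gamma recovers the coefficient of w_v, and beta recovers that of a
     monomial of the first kind, which is 0.
   The file first develops coefficients of images of monomials under the
   maps amap f: they are alternating, and a section of the terms of f that
   preserves the order of generators picks out a unique preimage
   (img_coef_lift). *)

Section Monomials.
Variables (d : Order.disp_t) (T : orderType d).
Local Notation gen := (gen T).
Local Notation inversions := (@Defs.inv d T).
Implicit Types (f : gen -> seq (rat * gen)) (s u v w : seq gen).

Definition mono_coef w u : rat :=
  if perm_eq w u && uniq w then (-1) ^+ (inversions w + inversions u) else 0.

Definition img_coef f s u : rat :=
  \sum_(p <- expand (map f s)) p.1 * mono_coef p.2 u.

Lemma sum_expand_cons (l : seq (rat * gen)) ls (G : rat * seq gen -> rat) :
  \sum_(p <- expand (l :: ls)) G p =
  \sum_(c <- l) \sum_(p <- expand ls) G (c.1 * p.1, c.2 :: p.2).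
Proof. by rewrite /= big_allpairs_dep. Qed.

Lemma sum_expand_alternating (A C : seq (seq (rat * gen))) L
    (G : rat * seq gen -> rat) :
  (forall k pre x y post,
      G (k, pre ++ x :: y :: post) = - G (k, pre ++ y :: x :: post)) ->
  \sum_(p <- expand (A ++ L :: L :: C)) G p = 0.
Proof.
elim: A G => [|l A IH] G HG; last first.
  rewrite cat_cons sum_expand_cons big1 // => c _.
  apply: (IH (fun p => G (c.1 * p.1, c.2 :: p.2))) => k pre x y post.
  exact: (HG _ (c.2 :: pre)).
rewrite cat0s sum_expand_cons.
set S := (X in X = 0).
suff HS : S = - S by apply/eqP; rewrite -Num.Theory.eqNr -HS.
rewrite /S; under eq_bigr do rewrite sum_expand_cons.
rewrite {1}exchange_big /= -sumrN; apply: eq_bigr => c2 _.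
rewrite -sumrN; apply: eq_bigr => c1 _.
rewrite -sumrN; apply: eq_bigr => q _ /=.
by rewrite (HG _ [::]) /= mulrCA.
Qed.

Lemma gen_lt_total (x y : gen) : x != y -> gen_lt x y = ~~ gen_lt y x.
Proof.
case: x y => [n t] [m t']; rewrite /gen_lt /=.
case: (ltgtP t t') => [//|//|<-] neq_xy /=.
have neq_nm : n != m by apply: contraNneq neq_xy => ->.
by case: (ltngtP n m) neq_nm; rewrite ?eqxx.
Qed.

Lemma perm_swap2 (x y : gen) post : perm_eq [:: x, y & post] [:: y, x & post].
Proof. by apply/permP => P /=; lia. Qed.

Lemma inversions_swap pre post x y :
  (inversions (pre ++ x :: y :: post) + gen_lt x y =
   inversions (pre ++ y :: x :: post) + gen_lt y x)%N.
Proof.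
elim: pre => [|z pre IH] /=; first lia.
have -> : count (fun g => gen_lt g z) (pre ++ [:: x, y & post]) =
          count (fun g => gen_lt g z) (pre ++ [:: y, x & post]).
  by apply/permP; rewrite perm_cat2l perm_swap2.
lia.
Qed.

Lemma mono_coef_swap pre x y post u :
  mono_coef (pre ++ x :: y :: post) u = - mono_coef (pre ++ y :: x :: post) u.
Proof.
have Hp : perm_eq (pre ++ x :: y :: post) (pre ++ y :: x :: post).
  by rewrite perm_cat2l perm_swap2.
rewrite /mono_coef (perm_uniq Hp) (permPl Hp).
case: ifP => [/andP [_ Hu]|]; last by rewrite oppr0.
have neq_xy : x != y.
  move: Hu; rewrite cat_uniq => /and3P [_ _] /=.
  by rewrite inE negb_or eq_sym => /andP [/andP []].
have := inversions_swap pre post x y; rewrite (gen_lt_total neq_xy).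
case: (gen_lt y x) => /= H.
  have -> : (inversions (pre ++ [:: x, y & post]) + inversions u =
     (inversions (pre ++ [:: y, x & post]) + inversions u).+1)%N by lia.
  by rewrite exprS mulN1r.
have -> : (inversions (pre ++ [:: y, x & post]) + inversions u =
     (inversions (pre ++ [:: x, y & post]) + inversions u).+1)%N by lia.
by rewrite exprS mulN1r opprK.
Qed.

Lemma img_coef_repeat f pre x post u : img_coef f (pre ++ x :: x :: post) u = 0.
Proof.
rewrite /img_coef map_cat.
apply: (sum_expand_alternating (map f pre) (map f post) (f x)).
by move=> k pre' y z post' /=; rewrite mono_coef_swap mulrN.
Qed.

Lemma img_coef_eq0 f s u :
  (forall p, p \in expand (map f s) -> ~~ perm_eq p.2 u) -> img_coef f s u = 0.
Proof.
move=> H; rewrite /img_coef big1_seq // => p /andP [_ Hp].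
by rewrite /mono_coef (negbTE (H p Hp)) mulr0.
Qed.

Lemma img_coef_alpha s u : img_coef (@alpha_gen d T) s u = mono_coef s u.
Proof.
have alpha_expand : expand (map (@alpha_gen d T) s) = [:: (1, s)].
  by elim: s => [|x s IH] //=; rewrite IH /= mulr1.
by rewrite /img_coef alpha_expand big_seq1 mul1r.
Qed.

Definition unit_coeffs f := forall x, all (fun c => c.1 == 1) (f x).
Definition distinct_terms f := forall x, uniq (map snd (f x)).

Lemma expand_unit f s p : unit_coeffs f -> p \in expand (map f s) -> p.1 = 1.
Proof.
move=> Hf; elim: s p => [|x s IH] p /=; first by rewrite inE => /eqP ->.
case/allpairsP => [[c q] [/= Hc Hq ->]] /=.
by rewrite (eqP (allP (Hf x) c Hc)) (IH _ Hq) mulr1.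
Qed.

Lemma expand_back f (g : gen -> gen) s p :
  {in s, forall x c, c \in f x -> g c.2 = x} ->
  p \in expand (map f s) -> map g p.2 = s.
Proof.
elim: s p => [|x s IH] p Hg /=; first by rewrite inE => /eqP ->.
case/allpairsP => [[c q] [/= Hc Hq ->]] /=.
rewrite (Hg x (mem_head _ _) _ Hc) (IH q) // => z Hz; apply: Hg.
by rewrite inE Hz orbT.
Qed.

Lemma expand_letter f s p y : p \in expand (map f s) -> y \in p.2 ->
  exists2 x, x \in s & y \in map snd (f x).
Proof.
elim: s p => [|x s IH] p /=; first by rewrite inE => /eqP ->.
case/allpairsP => [[c q] [/= Hc Hq ->]] /=; rewrite inE => /orP [/eqP ->|Hy].
  by exists x; rewrite ?mem_head //; apply/mapP; exists c.
by have [z Hz Hyz] := IH q Hq Hy; exists z => //; rewrite inE Hz orbT.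
Qed.

Lemma expand_forced f s p x y : p \in expand (map f s) -> x \in s ->
  map snd (f x) = [:: y] -> y \in p.2.
Proof.
elim: s p => [|z s IH] p //=.
case/allpairsP => [[c q] [/= Hc Hq ->]] /=.
rewrite inE => /orP [/eqP Hxz|Hx] Hf; last by rewrite inE (IH q Hq Hx Hf) orbT.
have : c.2 \in map snd (f x) by apply/mapP; exists c; rewrite // Hxz.
by rewrite Hf inE => /eqP ->; rewrite mem_head.
Qed.

Lemma expand_count f s w : distinct_terms f ->
  \sum_(p <- expand (map f s)) ((p.2 == w)%:R : rat) =
  (all2 (fun y x => y \in map snd (f x)) w s)%:R.
Proof.
have sum_terms (l : seq (rat * gen)) y : uniq (map snd l) ->
    \sum_(c <- l) ((c.2 == y)%:R : rat) = (y \in map snd l)%:R.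
  elim: l => [|c l IH] /=; first by rewrite big_nil.
  case/andP => Hc Hu; rewrite big_cons IH // inE eq_sym.
  case: (y =P c.2) => [->|_] /=; last by rewrite add0r.
  by rewrite (negbTE Hc) addr0.
move=> Hu; elim: s w => [|x s IH] w.
  by rewrite /= big_cons big_nil addr0; case: w.
rewrite map_cons sum_expand_cons; case: w => [|y w].
  by rewrite big1 // => c _; rewrite big1.
transitivity (\sum_(c <- f x) ((c.2 == y)%:R *
                (all2 (fun y x => y \in map snd (f x)) w s)%:R : rat)).
  apply: eq_bigr => c _; rewrite -IH mulr_sumr; apply: eq_bigr => q _ /=.
  by rewrite eqseq_cons; case: (c.2 == y); rewrite ?mul1r ?mul0r.
by rewrite -mulr_suml sum_terms // /= -natrM mulnb.
Qed.

Lemma inversions_map (h : gen -> gen) w :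
  {in w &, {mono h : x y / gen_lt x y}} -> inversions (map h w) = inversions w.
Proof.
elim: w => [|x w IH] Hh //=.
rewrite IH; last by move=> y z Hy Hz; apply: Hh; rewrite inE ?Hy ?Hz orbT.
congr (_ + _)%N; rewrite count_map; apply: eq_in_count => z Hz /=.
by apply: Hh; rewrite inE ?Hz ?eqxx ?orbT.
Qed.

Section UniquePreimage.
(* A section h of the terms of f (with left inverse g on terms), preserving
   the order on generators, singles out one word of each expansion. *)
Variables (f : gen -> seq (rat * gen)) (g h : gen -> gen) (s v : seq gen).
Hypothesis g_terms : {in s, forall x c, c \in f x -> g c.2 = x}.
Hypothesis h_term : {in v, forall x, h x \in map snd (f x)}.
Hypothesis gK : {in v, cancel h g}.
Hypothesis h_mono : {in v &, {mono h : x y / gen_lt x y}}.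

Lemma mono_coef_lift p : p \in expand (map f s) ->
  mono_coef p.2 (map h v) = (p.2 == map h s)%:R * mono_coef s v.
Proof.
move=> Hp; have p_s := expand_back g_terms Hp.
have h_inj : {in v &, injective h}.
  by move=> x y Hx Hy Hxy; rewrite -(gK Hx) -(gK Hy) Hxy.
rewrite {1}/mono_coef; case: (boolP (perm_eq p.2 (map h v) && uniq p.2)).
  case/andP => Hpe Hu.
  have p_hs : map h s = p.2.
    rewrite -p_s -map_comp; apply: map_id_in => y Hy /=.
    have : y \in map h v by rewrite -(perm_mem Hpe).
    by case/mapP => x Hx ->; rewrite gK.
  have hv_v : map g (map h v) = v by rewrite -map_comp; apply: map_id_in.
  have s_v : perm_eq s v by rewrite -p_s -hv_v perm_map.
  have s_uniq : uniq s.
    by rewrite (perm_uniq s_v) -(map_inj_in_uniq h_inj) -(perm_uniq Hpe).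
  rewrite p_hs eqxx mul1r /mono_coef s_v s_uniq -p_hs !inversions_map //.
  by move=> x y Hx Hy; apply: h_mono; rewrite -(perm_mem s_v).
move=> Hn; case: eqP => [p_hs|]; last by rewrite mul0r.
rewrite /mono_coef; case: ifP => [/andP [s_v s_uniq]|]; last by rewrite mulr0.
case/negP: Hn; rewrite p_hs perm_map //= map_inj_in_uniq //.
by move=> x y Hx Hy; apply: h_inj; rewrite -(perm_mem s_v).
Qed.

Lemma img_coef_lift : unit_coeffs f -> distinct_terms f ->
  img_coef f s (map h v) = mono_coef s v.
Proof.
move=> f_unit f_distinct.
rewrite /img_coef (eq_big_seq (fun p => (p.2 == map h s)%:R * mono_coef s v)).
  rewrite -big_distrl /= expand_count //.
  case Hsv: (perm_eq s v && uniq s); last by rewrite /mono_coef Hsv mulr0.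
  move/andP: Hsv => [s_v _].
  have all_terms t : {subset t <= v} ->
      all2 (fun y x => y \in map snd (f x)) (map h t) t.
    elim: t => [|x t IH] //= t_v; rewrite h_term ?t_v ?mem_head //= IH //.
    by move=> z Hz; apply: t_v; rewrite inE Hz orbT.
  by rewrite all_terms ?mul1r // => x; rewrite (perm_mem s_v).
by move=> p Hp; rewrite (expand_unit f_unit Hp) mul1r mono_coef_lift.
Qed.
End UniquePreimage.
End Monomials.

Section Coefficients.
Variables (d : Order.disp_t) (T : orderType d) (B : lmodType rat).
Implicit Types (f : gen T -> seq (rat * gen T)) (u : seq (gen T)).

Lemma coefE (x : elt T B) u : coef x u = \sum_(t <- x) mono_coef t.2 u *: t.1.
Proof.
rewrite /coef big_mkcond; apply: eq_bigr => t _; rewrite /mono_coef.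
by case: ifP => _; rewrite ?scale0r.
Qed.

Lemma coef_cat (x y : elt T B) u : coef (x ++ y) u = coef x u + coef y u.
Proof. by rewrite !coefE big_cat. Qed.

Lemma coef_amap f (x : elt T B) u :
  coef (amap f x) u = \sum_(t <- x) img_coef f t.2 u *: t.1.
Proof.
rewrite coefE /amap big_flatten big_map; apply: eq_bigr => t _.
rewrite big_map /img_coef scaler_suml; apply: eq_bigr => p _ /=.
by rewrite scalerA mulrC.
Qed.
End Coefficients.

Section Relabellings.
Variables (d : Order.disp_t) (T : orderType d).
Implicit Types (x : gen T) (P : pred T).

Definition relabel (m : T -> nat -> nat) x : gen T := (m x.2 x.1, x.2).

Lemma relabel_mono (m : T -> nat -> nat) :
  (forall t, {mono m t : a b / (a < b)%N}) -> {mono relabel m : x y / gen_lt x y}.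
Proof. by move=> Hm [n t] [n' t']; rewrite /gen_lt /=; case: eqP => [<-|]; rewrite ?Hm. Qed.

(* Left inverses of the terms of beta and gamma. *)
Definition unshift := relabel (fun _ n => n.-1).
Definition trunc := relabel (fun _ n => minn n 1).

(* Sections of beta and gamma: for t in P, beta_lift sends w_t to its term
   w'_t (else to w_t), and gamma_lift sends w'_t to its term w''_t (else to
   w'_t). *)
Definition beta_lift P := relabel (fun t n => if P t then n.+1 else n.*2).
Definition gamma_lift P := relabel (fun t n => if P t then n.*2 else n).

Lemma beta_unit : unit_coeffs (@beta_gen d T).
Proof. by move=> x; rewrite /beta_gen; case: ifP. Qed.

Lemma gamma_unit : unit_coeffs (@gamma_gen d T).
Proof. by move=> x; rewrite /gamma_gen; case: ifP. Qed.

Lemma beta_distinct : distinct_terms (@beta_gen d T).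
Proof. by move=> x; rewrite /beta_gen; case: ifP => _ //=; rewrite inE xpair_eqE. Qed.

Lemma gamma_distinct : distinct_terms (@gamma_gen d T).
Proof. by move=> x; rewrite /gamma_gen; case: ifP => _ //=; rewrite inE xpair_eqE. Qed.

Lemma beta_unshift x c : (x.1 <= 1)%N -> c \in beta_gen x -> unshift c.2 = x.
Proof. by case: x => [[|[|n]] t] //= _; rewrite !inE; try case/orP; move/eqP ->. Qed.

Lemma gamma_trunc x c : (x.1 <= 1)%N -> c \in gamma_gen x -> trunc c.2 = x.
Proof. by case: x => [[|[|n]] t] //= _; rewrite !inE; try case/orP; move/eqP ->. Qed.

Lemma beta_lift_term P x : (x.1 <= 1)%N -> beta_lift P x \in map snd (beta_gen x).
Proof.
by case: x => [[|[|n]] t] //= _; rewrite /beta_lift /relabel /=; case: (P t);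
  rewrite !inE ?eqxx ?orbT.
Qed.

Lemma gamma_lift_term P x : (x.1 <= 1)%N -> gamma_lift P x \in map snd (gamma_gen x).
Proof.
by case: x => [[|[|n]] t] //= _; rewrite /gamma_lift /relabel /=; case: (P t);
  rewrite !inE ?eqxx ?orbT.
Qed.

Lemma beta_liftK P x : (x.1 <= 1)%N -> unshift (beta_lift P x) = x.
Proof. by case: x => [[|[|n]] t] //= _; rewrite /unshift /beta_lift /relabel /=; case: (P t). Qed.

Lemma gamma_liftK P x : (x.1 <= 1)%N -> trunc (gamma_lift P x) = x.
Proof. by case: x => [[|[|n]] t] //= _; rewrite /trunc /gamma_lift /relabel /=; case: (P t). Qed.

Lemma beta_lift_mono P : {mono beta_lift P : x y / gen_lt x y}.
Proof. by apply: relabel_mono => t a b; case: (P t); rewrite ?ltnS ?ltn_double. Qed.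

Lemma gamma_lift_mono P : {mono gamma_lift P : x y / gen_lt x y}.
Proof. by apply: relabel_mono => t a b; case: (P t); rewrite ?ltn_double. Qed.
End Relabellings.

Section RepeatedIndex.
Variables (d : Order.disp_t) (T : orderType d) (B : lmodType rat).
Variables (r : nat) (I : r.-tuple T) (s0 t0 : 'I_r).
Hypothesis r_ge3 : (3 <= r)%N.
Hypothesis t0_next : val t0 = (val s0).+1.
Hypothesis I_repeat : tnth I s0 = tnth I t0.
Implicit Types (e : r.-tuple bool) (u v : seq (gen T)).

Local Notation i := (tnth I s0).
Local Notation word e := (wordI I e).

Lemma word_size e : size (word e) = r.
Proof. by rewrite /wordI size_zip size_map !size_tuple minnn. Qed.

Lemma word_label e x : x \in word e -> (x.1 <= 1)%N.
Proof.
move=> Hx; have : x.1 \in unzip1 (word e) by apply: map_f.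
rewrite /wordI unzip1_zip; last by rewrite size_map !size_tuple.
by case/mapP => b _ ->; case: b.
Qed.

Lemma word_nth e (k : 'I_r) :
  nth (0%N, i) (word e) k = (nat_of_bool (tnth e k), tnth I k).
Proof.
rewrite /wordI nth_zip; last by rewrite size_map !size_tuple.
by rewrite (nth_map false) ?size_tuple // -!tnth_nth.
Qed.

Lemma word_split e :
  word e = take s0 (word e) ++ (nat_of_bool (tnth e s0), i)
           :: (nat_of_bool (tnth e t0), i) :: drop t0.+1 (word e).
Proof.
have Ht : (t0 < size (word e))%N by rewrite word_size.
have Hs : (s0 < size (word e))%N by rewrite word_size.
rewrite -{1}(cat_take_drop s0 (word e)) (drop_nth (0%N, i) Hs) word_nth.
by rewrite -t0_next (drop_nth (0%N, i) Ht) word_nth I_repeat.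
Qed.

(* A duplicate-free w_I^e contains w_i and w'_i, since e_s != e_{s+1}. *)
Lemma word_uniq_mem e : uniq (word e) ->
  ((0%N, i) \in word e) && ((1%N, i) \in word e).
Proof.
rewrite [in X in X -> _]word_split cat_uniq => /and3P [_ _] /=.
rewrite inE negb_or => /andP [/andP [Hne _] _].
rewrite word_split !mem_cat !inE.
by case: (tnth e s0) Hne; case: (tnth e t0); rewrite /= ?eqxx ?orbT.
Qed.

Lemma word_support e v : perm_eq (word e) v -> uniq (word e) ->
  [/\ {in v, forall x, x.1 <= 1}%N, (0%N, i) \in v, (1%N, i) \in v
    & exists2 x, x \in v & x.2 != i].
Proof.
move=> e_v e_uniq; have mem_v := perm_mem e_v.
have /andP [mem0 mem1] := word_uniq_mem e_uniq.
have v_label x : x \in v -> (x.1 <= 1)%N by rewrite -mem_v; apply: word_label.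
split=> //; rewrite -?mem_v //; apply/hasP; apply: contraT => /hasPn only_i.
have : (size v <= size [:: (0%N, i); (1%N, i)])%N.
  apply: uniq_leq_size; first by rewrite -(perm_uniq e_v).
  move=> x Hx; move: (v_label x Hx) (only_i x Hx); rewrite negbK.
  by case: x {Hx} => [[|[|n]] t] //= _ /eqP ->; rewrite !inE eqxx ?orbT.
by rewrite -(perm_size e_v) word_size /=; lia.
Qed.

Variable a : r.-tuple bool -> B.
Local Notation eps :=
  (filter (fun e : r.-tuple bool => (0 < count id e < r)%N) (enum {: r.-tuple bool})).
Local Notation img_sum f u := (\sum_(e <- eps) img_coef f (word e) u *: a e).

Lemma coef_chi v : coef (chi I a) v = \sum_(e <- eps) mono_coef (word e) v *: a e.
Proof. by rewrite coefE /chi big_map. Qed.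

Lemma coef_amap_chi f u : coef (amap f (chi I a)) u = img_sum f u.
Proof. by rewrite coef_amap /chi big_map. Qed.

(* alpha(chi_I) only involves the first two copies of /\W. *)
Lemma alpha_vanish u y : y \in u -> (2 <= y.1)%N -> img_sum (@alpha_gen d T) u = 0.
Proof.
move=> Hy Hl; rewrite big1 // => e _; rewrite img_coef_alpha /mono_coef.
case: ifP => [/andP [e_u _]|_]; last by rewrite scale0r.
by move: Hy; rewrite -(perm_mem e_u) => /word_label; lia.
Qed.

(* delta(chi_I) does not involve the first copy of /\W. *)
Lemma delta_vanish u y : y \in u -> y.1 = 0%N -> img_sum (@delta_gen d T) u = 0.
Proof.
move=> Hy Hl; rewrite big1 // => e _; rewrite img_coef_eq0 ?scale0r //.
move=> p Hp; apply/negP => p_u; move: Hy; rewrite -(perm_mem p_u).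
by case/(expand_letter Hp) => x _; rewrite /delta_gen; case: ifP;
  rewrite /= inE => _ /eqP y_eq; rewrite y_eq in Hl.
Qed.

(* Every monomial of gamma(chi_I) contains w_i: gamma fixes w_i, and the
   terms where both w_i^{e_s}, w_i^{e_{s+1}} are w_i have a square. *)
Lemma gamma_vanish u : (0%N, i) \notin u -> img_sum (@gamma_gen d T) u = 0.
Proof.
move=> u_i; rewrite big1 // => e _.
case Hs: (tnth e s0); case Ht: (tnth e t0);
  first by rewrite word_split Hs Ht img_coef_repeat scale0r.
all: rewrite img_coef_eq0 ?scale0r // => p Hp; apply: contra u_i => p_u.
all: rewrite -(perm_mem p_u); apply: (expand_forced Hp (x := (0%N, i))) => //.
all: by rewrite word_split !mem_cat !inE ?Hs ?Ht eqxx ?orbT.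
Qed.

Lemma beta_lift_coef P v : {in v, forall x, x.1 <= 1}%N ->
  img_sum (@beta_gen d T) (map (beta_lift P) v) = coef (chi I a) v.
Proof.
move=> v_label; rewrite coef_chi; apply: eq_bigr => e _.
rewrite (img_coef_lift (g := @unshift _ T)) //.
- by move=> x /word_label x_label c; exact: beta_unshift x_label.
- by move=> x /v_label; apply: beta_lift_term.
- by move=> x /v_label; apply: beta_liftK.
- by move=> x y _ _; apply: beta_lift_mono.
- exact: beta_unit.
- exact: beta_distinct.
Qed.

Lemma gamma_lift_coef P v : {in v, forall x, x.1 <= 1}%N ->
  img_sum (@gamma_gen d T) (map (gamma_lift P) v) = coef (chi I a) v.
Proof.
move=> v_label; rewrite coef_chi; apply: eq_bigr => e _.
rewrite (img_coef_lift (g := @trunc _ T)) //.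
- by move=> x /word_label x_label c; exact: gamma_trunc x_label.
- by move=> x /v_label; apply: gamma_lift_term.
- by move=> x /v_label; apply: gamma_liftK.
- by move=> x y _ _; apply: gamma_lift_mono.
- exact: gamma_unit.
- exact: gamma_distinct.
Qed.

Hypothesis balance :
  ext_eq (alpha (chi I a) ++ beta (chi I a)) (gamma (chi I a) ++ delta (chi I a)).

Lemma balance_coef u :
  img_sum (@alpha_gen d T) u + img_sum (@beta_gen d T) u =
  img_sum (@gamma_gen d T) u + img_sum (@delta_gen d T) u.
Proof. by have := balance u; rewrite !coef_cat !coef_amap_chi. Qed.

(* At the lift
   u of v sending w_i, w'_i, w_t, w'_t (t != i) to w'_i, w''_i, w_t, w''_t,
   alpha, gamma and delta vanish while beta gives the coefficient of w_v. *)
Lemma coef_chi_unprimed v : {in v, forall x, x.1 <= 1}%N -> (1%N, i) \in v ->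
  (exists2 k, (0%N, k) \in v & k != i) -> coef (chi I a) v = 0.
Proof.
move=> v_label v_i' [k v_k k_i].
pose u := map (beta_lift (pred1 i)) v.
have u_i'' : (2%N, i) \in u.
  by apply/mapP; exists (1%N, i); rewrite // /beta_lift /relabel /= eqxx.
have u_k : (0%N, k) \in u.
  by apply/mapP; exists (0%N, k); rewrite // /beta_lift /relabel /= (negbTE k_i).
have u_no_i : (0%N, i) \notin u.
  apply/mapP => [[[n t] _]]; rewrite /beta_lift /relabel /=.
  by case: eqP => [_ []|t_i [_ eq_t]] //; rewrite eq_t in t_i.
have := balance_coef u.
rewrite (alpha_vanish u_i'') // (delta_vanish u_k) // gamma_vanish //.
by rewrite beta_lift_coef // add0r addr0.
Qed.

(* At the lift u of v sending w'_i to w''_i, alpha and delta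
   vanish, gamma gives the coefficient of w_v, and beta the coefficient of
   the monomial obtained by unpriming the letters of index other than i,
   which is 0 by the first case. *)
Lemma coef_chi_primed v : {in v, forall x, x.1 <= 1}%N ->
  (0%N, i) \in v -> (1%N, i) \in v ->
  {in v, forall x, x.2 != i -> x.1 = 1%N} -> (exists2 x, x \in v & x.2 != i) ->
  coef (chi I a) v = 0.
Proof.
move=> v_label v_i v_i' v_primed [y v_y y_i].
pose u := map (gamma_lift (pred1 i)) v.
pose v' := map (relabel (fun t n => if t == i then n else n.-1)) v.
have u_v' : u = map (beta_lift (predC1 i)) v'.
  rewrite -map_comp; apply/eq_in_map => x x_v /=.
  rewrite /gamma_lift /beta_lift /relabel /=.
  by case: eqP => [//|/eqP x_i]; rewrite (v_primed x x_v x_i); case: x {x_v x_i}.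
have v'_label : {in v', forall x, x.1 <= 1}%N.
  move=> z /mapP [x /v_label x_v ->]; rewrite /relabel /=.
  by case: ifP => _ //; apply: leq_trans (leq_pred _) x_v.
have v'_i' : (1%N, i) \in v'.
  by apply/mapP; exists (1%N, i); rewrite // /relabel /= eqxx.
have v'_y : (0%N, y.2) \in v'.
  by apply/mapP; exists y; rewrite // /relabel /= (negbTE y_i) (v_primed y v_y y_i).
have u_i'' : (2%N, i) \in u.
  by apply/mapP; exists (1%N, i); rewrite // /gamma_lift /relabel /= eqxx.
have u_i : (0%N, i) \in u.
  by apply/mapP; exists (0%N, i); rewrite // /gamma_lift /relabel /= eqxx.
have := balance_coef u.
rewrite (alpha_vanish u_i'') // (delta_vanish u_i) // gamma_lift_coef //.
rewrite u_v' beta_lift_coef // coef_chi_unprimed //; last by exists y.2.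
by rewrite add0r addr0.
Qed.

Lemma coef_chi_eq0 v : coef (chi I a) v = 0.
Proof.
have [/hasP [e _]|/hasPn none] := boolP (has (fun e => mono_coef (word e) v != 0) eps);
  last by rewrite coef_chi big1_seq // => e /andP [_ /none /negPn /eqP ->]; rewrite scale0r.
rewrite /mono_coef; case: ifP => [/andP [e_v e_uniq] _|]; last by rewrite eqxx.
have [v_label v_i v_i' [y v_y y_i]] := word_support e_v e_uniq.
have [/hasP [[n k] v_k /andP [/= k_i /eqP n0]]|/hasPn primed] :=
  boolP (has (fun x : gen T => (x.2 != i) && (x.1 == 0%N)) v).
  by apply: coef_chi_unprimed => //; exists k; rewrite // -n0.
apply: coef_chi_primed => //; last by exists y.
move=> x x_v x_i; move: (v_label x x_v) (primed x x_v); rewrite x_i /=.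
by case: (x.1) => [|[|]].
Qed.
End RepeatedIndex.

Unset Implicit Arguments. Set Strict Implicit. Set Printing Implicit Defensive.
Theorem mainTheorem9 (d : Order.disp_t) (T : orderType d) (B : algType rat)
    (r : nat) (I : r.-tuple T) (a : r.-tuple bool -> B) :
  (3 <= r)%N ->
  sorted (fun x y => (x <= y)%O) I ->
  (exists s t : 'I_r, val t = (val s).+1 /\ tnth I s = tnth I t) ->
  ext_eq (alpha (chi I a) ++ beta (chi I a)) (gamma (chi I a) ++ delta (chi I a)) ->
  ext_eq (chi I a) [::].
Proof.
move=> r_ge3 _ [s [t [t_next I_repeat]]] balance v.
by rewrite (coef_chi_eq0 r_ge3 t_next I_repeat balance) /coef big_nil.
Qed.
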